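(* Let $r\ge3$, $n>r$, $\lambda\in\Lambda(n,r)$ (regarded as an $n$-periodic sequence) and $1\le i\le n$. In $T$: (i) $E_i1_\lambda=1_{\lambda+\alpha_i}E_i$ if $\lambda_{i+1}>0$, and $E_i1_\lambda=0$ otherwise; (ii) $F_i1_\lambda=1_{\lambda-\alpha_i}F_i$ if $\lambda_i>0$, and $F_i1_\lambda=0$ otherwise.
   Context: $T$ is the $\mathbb{Q}(v)$-algebra with generators $E_i,F_i,K_i^{\pm1}$ ($1\le i\le n$, indices mod $n$) and relations: $K_iK_j=K_jK_i$; $K_iK_i^{-1}=K_i^{-1}K_i=1$; $K_iE_j=v^{\epsilon^+(i,j)}E_jK_i$; $K_iF_j=v^{-\epsilon^+(i,j)}F_jK_i$ ($\epsilon^+(i,j)=1$ if $j=i$, $-1$ if $j\equiv i-1\pmod n$, $0$ otherwise); $E_iF_j-F_jE_i=\delta_{ij}\frac{K_iK_{i+1}^{-1}-K_i^{-1}K_{i+1}}{v-v^{-1}}$; $E_iE_j=E_jE_i$, $F_iF_j=F_jF_i$ if $i-j\not\equiv\pm1$; $E_i^2E_j-(v+v^{-1})E_iE_jE_i+E_jE_i^2=0$, $F_i^2F_j-(v+v^{-1})F_iF_jF_i+F_jF_i^2=0$ if $i-j\equiv\pm1\pmod n$; $K_1\cdots K_n=v^r$; $\prod_{j=0}^r(K_i-v^j)=0$. $\Lambda(n,r)$: compositions of $r$ into $n$ nonnegative parts, extended $n$-periodically ($\lambda_{n+1}=\lambda_1$). $1_\lambda=\prod_{i=1}^n\prod_{s=1}^{\lambda_i}\frac{K_iv^{-s+1}-K_i^{-1}v^{s-1}}{v^s-v^{-s}}$.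 $\alpha_i\in\mathbb{Z}^n$ has $j$-th entry $1$ if $j\equiv i$, $-1$ if $j\equiv i+1\pmod n$, $0$ otherwise. *)

From HB Require Import structures.
From mathcomp Require Import all_boot all_order all_algebra.
Set Implicit Arguments. Unset Strict Implicit. Unset Printing Implicit Defensive.
Import Order.TTheory GRing.Theory Num.Theory.
Local Open Scope ring_scope.

Definition Qv : fieldType := {fraction {poly rat}}.
Definition v : Qv := tofrac ('X : {poly rat}).

(* Indices 1..n (mod n) are represented by 'I_n (i.e. 0..n-1);
   i+1 mod n is [ordS i]. *)

Definition epsp (n : nat) (i j : 'I_n) : int :=
  if j == i then 1 else if i == ordS j then -1 else 0.

Definition T_relations (n r : nat) (A : algType Qv)
    (E F K Ki : 'I_n -> A) : Prop :=
  (forall i j, K i * K j = K j * K i) /\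
      (forall i, K i * Ki i = 1 /\ Ki i * K i = 1) /\
      (forall i j, K i * E j = (v ^ epsp i j) *: (E j * K i)) /\
      (forall i j, K i * F j = (v ^ (- epsp i j)) *: (F j * K i)) /\
      (forall i j, E i * F j - F j * E i =
          if i == j then (v - v^-1)^-1 *: (K i * Ki (ordS i) - Ki i * K (ordS i))
          else 0) /\
      (forall i j, j != ordS i -> i != ordS j ->
          E i * E j = E j * E i /\ F i * F j = F j * F i) /\
      (forall i j, (j == ordS i) || (i == ordS j) ->
          E i * E i * E j - (v + v^-1) *: (E i * E j * E i) + E j * E i * E i = 0 /\
          F i * F i * F j - (v + v^-1) *: (F i * F j * F i) + F j * F i * F i = 0  ) /\
      \prod_(i < n) K i = (v ^+ r) *: 1 /\
      (forall i, \prod_(0 <= j < r.+1) (K i - (v ^+ j) *: 1) = 0).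

Definition one_lam (n : nat) (A : algType Qv) (K Ki : 'I_n -> A)
    (lam : 'I_n -> nat) : A :=
  \prod_(i < n) \prod_(1 <= s < (lam i).+1)
     ((v ^ (1 - (s:int)) / (v ^+ s - v ^- s)) *: K i
      - (v ^ ((s:int) - 1) / (v ^+ s - v ^- s)) *: Ki i).

Definition plus_alpha (n : nat) (lam : 'I_n -> nat) (i : 'I_n) : 'I_n -> nat :=
  fun j => if j == i then (lam j + 1)%N
           else if j == ordS i then (lam j - 1)%N else lam j.
Definition minus_alpha (n : nat) (lam : 'I_n -> nat) (i : 'I_n) : 'I_n -> nat :=
  fun j => if j == i then (lam j - 1)%N
           else if j == ordS i then (lam j + 1)%N else lam j.

From mathcomp Require Import all_boot all_order all_algebra.
From mathcomp Require Import zify.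

(* Each K_k is annihilated by prod_(0 <= j <= r) (K_k - v^j), so
   evaluating the Lagrange basis for the nodes v^0, ..., v^r at K_k gives
   elements summing to 1 on which K_k acts by v^j; their products e_f, for
   f : 'I_n -> {0..r}, decompose 1 into simultaneous weight components, and
   e_f = 0 unless sum f = r because K_1 ... K_n = v^r.  On a vector of weight
   mu, 1_lambda acts by the product of the quantum binomials [mu_k, lambda_k],
   which is 1 for mu = lambda and 0 as soon as some mu_k < lambda_k; as both
   weights sum to r, this forces 1_lambda = e_lambda.  Since E_i and F_i shift
   weights by +-alpha_i, both E_i 1_lambda and 1_(lambda + alpha_i) E_i equal
   1_(lambda + alpha_i) E_i 1_lambda; when the shifted weight has a
   component -1 the product is 0, as v^-1 is not among the eigenvalues
   v^0, ..., v^r of K_k. *)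

Set Implicit Arguments.
Unset Strict Implicit.
Unset Printing Implicit Defensive.
Import GRing.Theory.
Local Open Scope ring_scope.

Section EigenProducts.
Variables (F : fieldType) (A : algType F).

Lemma prodr_eigenl (I : Type) (s : seq I) (P : pred I) (f : I -> A) (c : I -> F)
    (X : A) :
  (forall k, P k -> f k * X = c k *: X) ->
  (\prod_(k <- s | P k) f k) * X = (\prod_(k <- s | P k) c k) *: X.
Proof.
move=> fX; elim: s => [|k s IHs]; first by rewrite !big_nil mul1r scale1r.
rewrite !big_cons; case: ifP => // Pk.
by rewrite -mulrA IHs -scalerAr fX // scalerA mulrC.
Qed.

Lemma prodr_eigenr (I : Type) (s : seq I) (P : pred I) (f : I -> A) (c : I -> F)
    (X : A) :
  (forall k, P k -> X * f k = c k *: X) ->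
  X * (\prod_(k <- s | P k) f k) = (\prod_(k <- s | P k) c k) *: X.
Proof.
move=> Xf; elim/last_ind: s => [|s k IHs]; first by rewrite !big_nil mulr1 scale1r.
rewrite -!cats1 !big_cat !big_cons !big_nil /=; case: ifP => Pk; last by rewrite !mulr1.
by rewrite !mulr1 mulrA IHs -scalerAl Xf // scalerA.
Qed.

Lemma mulr_prod_eq0 (I : eqType) (s : seq I) (f : I -> A) (y : A) (k : I) :
  k \in s -> (forall j, GRing.comm y (f j)) -> y * f k = 0 ->
  y * \prod_(j <- s) f j = 0.
Proof.
move=> + yf yfk; elim: s => [|j s IHs] //.
rewrite in_cons big_cons => /predU1P[<-|/IHs ys0]; first by rewrite mulrA yfk mul0r.
by rewrite mulrA yf -mulrA ys0 mulr0.
Qed.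

Lemma eigen_ann_eq0 (m : nat) (x : nat -> F) (a X : A) (c : F) :
  \prod_(j < m) (a - x j *: 1) = 0 -> a * X = c *: X ->
  (forall j : 'I_m, c != x j) -> X = 0.
Proof.
move=> a_ann aX cx.
have : (\prod_(j < m) (c - x j)) *: X = 0.
  rewrite -(@prodr_eigenl 'I_m _ _ (fun j => a - x j *: 1)) ?a_ann ?mul0r // => j _.
  by rewrite mulrBl aX -scalerAl mul1r scalerBl.
move/eqP; rewrite scaler_eq0 prodf_seq_eq0 => /orP[/hasP[j _]|/eqP //].
by rewrite subr_eq0 (negPf (cx j)).
Qed.

End EigenProducts.

Section SpectralIdempotents.
Variables (F : fieldType) (A : algType F) (m : nat) (x : nat -> F) (a : A).
Hypothesis x_inj : injective x.

Definition spectral_idem (j : 'I_m.+1) : A := horner_alg a (tnth (lagrange m.+1 x) j).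

Lemma sum_spectral_idem : \sum_j spectral_idem j = 1.
Proof.
rewrite -rmorph_sum -(rmorph1 (horner_alg a)); congr (horner_alg a _).
rewrite [RHS](@lagrange_gen _ m.+1 _ isT x_inj) ?size_poly1 //.
by apply: eq_bigr => j _; rewrite hornerC mul1r.
Qed.

Lemma commr_spectral_idem (b : A) j : GRing.comm b a -> GRing.comm b (spectral_idem j).
Proof. by move=> ba; apply: commr_horner => // i; rewrite coef_map; apply: comm_alg. Qed.

Hypothesis a_ann : \prod_(j < m.+1) (a - x j *: 1) = 0.

Lemma spectral_idem_eigen j : a * spectral_idem j = x j *: spectral_idem j.
Proof.
apply/eqP; rewrite -subr_eq0 -mulr_algl -mulrBl.
have -> : a - x j *: 1 = horner_alg a ('X - (x j)%:P).
  by rewrite rmorphB /= horner_algX horner_algC.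
have XsubC_mul_lagrange : ('X - (x j)%:P) * \prod_(k < m.+1 | k != j) ('X - (x k)%:P)
    = \prod_(k < m.+1) ('X - (x k)%:P) by rewrite [RHS](bigD1 j).
rewrite /spectral_idem lagrangeE // -rmorphM /= mulrCA XsubC_mul_lagrange rmorphM.
rewrite rmorph_prod /= (eq_bigr (fun k : 'I_m.+1 => a - x k *: 1)) ?a_ann ?mulr0 //.
move=> k _.
by rewrite rmorphB /= horner_algX horner_algC.
Qed.
End SpectralIdempotents.

Lemma v_neq0 : v != 0.
Proof. by rewrite /v tofrac_eq0 polyX_eq0. Qed.

Lemma expvn_eq1 (k : nat) : v ^+ k = 1 -> k = 0%N.
Proof.
rewrite /v -rmorphXn -(rmorph1 (@tofrac _)) => /eqP; rewrite tofrac_eq => /eqP.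
by move/(congr1 (fun p : {poly rat} => size p)); rewrite size_polyXn size_poly1 => -[].
Qed.

Lemma expvz_inj : injective (@exprz Qv v).
Proof.
have expvz_eq1 (z : int) : v ^ z = 1 -> z = 0.
  case: z => k /=; first by move/expvn_eq1 => ->.
  by rewrite NegzE -exprnN -[1]invr1 => /invr_inj/expvn_eq1.
move=> a b ab; apply/eqP; rewrite -subr_eq0; apply/eqP/expvz_eq1.
by rewrite expfzDr ?v_neq0 // ab -invr_expz mulfV // expfz_neq0 ?v_neq0.
Qed.

Lemma expvn_inj : injective (GRing.exp v).
Proof. by move=> a b /(@expvz_inj a b) []. Qed.

Definition qnum (z : int) : Qv := v ^ z - v ^ (- z).

(* The quantum binomial [t, l]; the factors v - v^-1 of the quantum integers
   cancel, so they are left out of qnum. *)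
Definition qbinom (t : int) (l : nat) : Qv :=
  \prod_(1 <= s < l.+1) (qnum (t + 1 - s%:Z) / qnum s%:Z).

Lemma qnum_eq0 (z : int) : (qnum z == 0) = (z == 0).
Proof.
rewrite /qnum subr_eq0; apply/eqP/eqP => [/expvz_inj|->]; last by rewrite oppr0.
by lia.
Qed.

Lemma qbinomnn (t : nat) : qbinom t t = 1.
Proof.
rewrite /qbinom prodf_div [X in X / _]big_nat_rev /=.
rewrite [X in X / _](eq_big_nat _ _ (F2 := fun s => qnum s%:Z)) => [|s /andP[s_gt0 s_le]].
  rewrite mulfV // prodf_seq_neq0; apply/allP => s; rewrite mem_index_iota.
  by case/andP=> s_gt0 _; rewrite /= qnum_eq0; lia.
by congr qnum; lia.
Qed.

Lemma qbinom_small (t l : nat) : (t < l)%N -> qbinom t l = 0.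
Proof.
move=> lt_tl; apply/eqP; rewrite /qbinom prodf_seq_eq0; apply/hasP.
exists t.+1; first by rewrite mem_index_iota ltnS.
by rewrite /= mulf_eq0 qnum_eq0; apply/orP; left; lia.
Qed.

Section Weights.
Variables (n r : nat) (A : algType Qv) (K Ki : 'I_n -> A).
Hypothesis K_comm : forall i j, K i * K j = K j * K i.
Hypothesis K_inv : forall i, K i * Ki i = 1 /\ Ki i * K i = 1.

Definition lweight (X : A) (mu : 'I_n -> int) := forall k, K k * X = v ^ mu k *: X.
Definition rweight (X : A) (mu : 'I_n -> int) := forall k, X * K k = v ^ mu k *: X.

Lemma Ki_lweight X mu k : lweight X mu -> Ki k * X = v ^ (- mu k) *: X.
Proof.
move=> XK; have := congr1 (fun y => Ki k * y) (XK k).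
rewrite mulrA (proj2 (K_inv k)) mul1r -scalerAr => XE.
by rewrite {2}XE scalerA -expfzDr ?v_neq0 // addNr scale1r.
Qed.

Lemma Ki_rweight X mu k : rweight X mu -> X * Ki k = v ^ (- mu k) *: X.
Proof.
move=> XK; have := congr1 (fun y => y * Ki k) (XK k).
rewrite -mulrA (proj1 (K_inv k)) mulr1 -scalerAl => XE.
by rewrite {2}XE scalerA -expfzDr ?v_neq0 // addNr scale1r.
Qed.

Lemma one_lam_factor_value (s : nat) (t : int) :
  (v ^ (1 - s%:Z) / (v ^+ s - v ^- s)) * v ^ t
    - (v ^ (s%:Z - 1) / (v ^+ s - v ^- s)) * v ^ (- t)
  = qnum (t + 1 - s%:Z) / qnum s%:Z.
Proof.
rewrite /qnum exprnN mulrAC [X in _ - X]mulrAC -mulrBl -!expfzDr ?v_neq0 //.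
by congr ((v ^ _ - v ^ _) / _); lia.
Qed.

Lemma one_lam_lweight lam X mu : lweight X mu ->
  one_lam K Ki lam * X = (\prod_k qbinom (mu k) (lam k)) *: X.
Proof.
move=> XK; apply: prodr_eigenl => k _; apply: prodr_eigenl => s _.
rewrite mulrBl -!scalerAl XK (Ki_lweight k XK) !scalerA -scalerBl.
by rewrite one_lam_factor_value.
Qed.

Lemma one_lam_rweight lam X mu : rweight X mu ->
  X * one_lam K Ki lam = (\prod_k qbinom (mu k) (lam k)) *: X.
Proof.
move=> XK; apply: prodr_eigenr => k _; apply: prodr_eigenr => s _.
rewrite mulrBr -!scalerAr XK (Ki_rweight k XK) !scalerA -scalerBl.
by rewrite one_lam_factor_value.
Qed.

Lemma one_lam_lweight_id (lam : 'I_n -> nat) X :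
  lweight X (fun k => (lam k)%:Z) -> one_lam K Ki lam * X = X.
Proof. by move/one_lam_lweight->; rewrite big1 ?scale1r // => k _; apply: qbinomnn. Qed.

Lemma one_lam_rweight_id (lam : 'I_n -> nat) X :
  rweight X (fun k => (lam k)%:Z) -> X * one_lam K Ki lam = X.
Proof. by move/one_lam_rweight->; rewrite big1 ?scale1r // => k _; apply: qbinomnn. Qed.

Hypothesis K_prod : \prod_(i < n) K i = v ^+ r *: 1.
Hypothesis K_ann : forall i, \prod_(0 <= j < r.+1) (K i - v ^+ j *: 1) = 0.

Let K_ann_ord i : \prod_(j < r.+1) (K i - v ^+ j *: 1) = 0.
Proof. by rewrite -(K_ann i) big_mkord. Qed.

Definition weight_idem (f : {ffun 'I_n -> 'I_r.+1}) : A :=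
  \prod_k spectral_idem (GRing.exp v) (K k) (f k).

Lemma sum_weight_idem : \sum_f weight_idem f = 1.
Proof.
rewrite -(bigA_distr_bigA (fun k (j : 'I_r.+1) => spectral_idem (GRing.exp v) (K k) j)).
by rewrite big1 // => k _; apply: sum_spectral_idem expvn_inj.
Qed.

Lemma commr_weight_idem k f : GRing.comm (K k) (weight_idem f).
Proof. by apply: commr_prod => j _; apply/commr_spectral_idem/K_comm. Qed.

Lemma weight_idem_lweight f : lweight (weight_idem f) (fun k => (f k : nat)%:Z).
Proof.
move=> k; apply/eqP; rewrite -subr_eq0 -mulr_algl -mulrBl /weight_idem; apply/eqP.
apply: (mulr_prod_eq0 (k := k)) => [|j|]; first exact: mem_index_enum.
  apply/commr_sym/commrB; last exact/commr_sym/comm_alg.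
  exact/commr_sym/commr_spectral_idem.
rewrite mulrBl (spectral_idem_eigen expvn_inj (K_ann_ord k)).
by rewrite -scalerAl mul1r subrr.
Qed.

Lemma weight_idem_rweight f : rweight (weight_idem f) (fun k => (f k : nat)%:Z).
Proof. by move=> k; rewrite -commr_weight_idem weight_idem_lweight. Qed.

Lemma weight_idem_eq0 (f : {ffun 'I_n -> 'I_r.+1}) :
  (\sum_k f k)%N != r -> weight_idem f = 0.
Proof.
move=> sum_f_neq; apply/eqP.
have := @prodr_eigenl _ _ _ (index_enum 'I_n) xpredT K _ (weight_idem f)
  (fun k _ => weight_idem_lweight f k).
rewrite K_prod mulr_algl prodrXr => /eqP; rewrite -subr_eq0 -scalerBl scaler_eq0.
by rewrite subr_eq0 (inj_eq expvn_inj) eq_sym (negPf sum_f_neq).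
Qed.

Lemma inord_partK (lam : 'I_n -> nat) k :
  (\sum_k lam k)%N = r -> (inord (lam k) : 'I_r.+1) = lam k :> nat.
Proof. by move=> sum_lam; rewrite inordK // ltnS -sum_lam (bigD1 k) //= leq_addr. Qed.

Lemma one_lamE (lam : 'I_n -> nat) : (\sum_k lam k)%N = r ->
  one_lam K Ki lam = weight_idem [ffun k => inord (lam k)].
Proof.
move=> sum_lam; set f0 : {ffun 'I_n -> 'I_r.+1} := [ffun k => inord (lam k)].
have f0E k : (f0 k : nat) = lam k by rewrite ffunE inord_partK.
rewrite -[LHS]mulr1 -sum_weight_idem mulr_sumr (bigD1 f0) //= big1 ?addr0.
  by apply: one_lam_lweight_id => k; rewrite -f0E weight_idem_lweight.
move=> f f_neq; rewrite (one_lam_lweight _ (weight_idem_lweight f)).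
have [/existsP[k lt_fk]|/existsPn ge_f] := boolP [exists k, (f k < lam k)%N].
  by rewrite (bigD1 k) //= qbinom_small // mul0r scale0r.
rewrite weight_idem_eq0 ?scaler0 //; apply: contra f_neq => /eqP sum_f.
have le_f k : (lam k <= f k)%N by rewrite leqNgt ge_f.
have := leqif_sum (fun k (_ : true) => leqif_eq (le_f k)).
rewrite sum_f sum_lam => /leqif_refl/forallP eq_f.
by apply/eqP/ffunP => k; apply: val_inj; rewrite /= f0E; apply/esym/eqP/eq_f.
Qed.

Lemma lweight_one_lam (lam : 'I_n -> nat) : (\sum_k lam k)%N = r ->
  lweight (one_lam K Ki lam) (fun k => (lam k)%:Z).
Proof.
by move=> sum_lam k; rewrite one_lamE // weight_idem_lweight ffunE inord_partK.
Qed.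

Lemma rweight_one_lam (lam : 'I_n -> nat) : (\sum_k lam k)%N = r ->
  rweight (one_lam K Ki lam) (fun k => (lam k)%:Z).
Proof.
by move=> sum_lam k; rewrite one_lamE // weight_idem_rweight ffunE inord_partK.
Qed.

Lemma lweight_neg_eq0 X mu k : lweight X mu -> mu k < 0 -> X = 0.
Proof.
move=> XK mu_neg; apply: (eigen_ann_eq0 (K_ann_ord k) (XK k)) => j.
by apply/eqP => /(@expvz_inj _ j); lia.
Qed.

Definition homogeneous (G : A) (w : 'I_n -> int) :=
  forall k, K k * G = v ^ w k *: (G * K k).

Lemma lweightM G w X mu nu : homogeneous G w -> lweight X mu ->
  (forall k, nu k = w k + mu k) -> lweight (G * X) nu.
Proof.
move=> homG XK nuE k.
by rewrite mulrA homG -scalerAl -mulrA XK -scalerAr scalerA -expfzDr ?v_neq0 ?nuE.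
Qed.

Lemma rweightM G w X mu nu : homogeneous G w -> rweight X mu ->
  (forall k, nu k = mu k - w k) -> rweight (X * G) nu.
Proof.
move=> homG XK nuE k.
have GK : G * K k = v ^ (- w k) *: (K k * G).
  by rewrite homG scalerA -expfzDr ?v_neq0 // addNr scale1r.
by rewrite -mulrA GK -scalerAr mulrA XK -scalerAl scalerA -expfzDr ?v_neq0 // nuE addrC.
Qed.

Lemma homogeneous_one_lam G w (lam nu : 'I_n -> nat) : homogeneous G w ->
  (\sum_k lam k)%N = r -> (\sum_k nu k)%N = r ->
  (forall k, (nu k)%:Z = w k + (lam k)%:Z) ->
  G * one_lam K Ki lam = one_lam K Ki nu * G.
Proof.
move=> homG sum_lam sum_nu nuE.
have /one_lam_lweight_id <- := lweightM homG (lweight_one_lam sum_lam) nuE.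
rewrite mulrA one_lam_rweight_id //.
by apply: (rweightM homG (rweight_one_lam sum_nu)) => k; rewrite nuE addrC addKr.
Qed.

Lemma homogeneous_one_lam_eq0 G w (lam : 'I_n -> nat) k : homogeneous G w ->
  (\sum_k lam k)%N = r -> w k + (lam k)%:Z < 0 -> G * one_lam K Ki lam = 0.
Proof.
move=> homG sum_lam; apply: (@lweight_neg_eq0 _ (fun k => w k + (lam k)%:Z)).
exact: lweightM homG (lweight_one_lam sum_lam) _.
Qed.
End Weights.

Lemma ordS_neq n (i : 'I_n) : (1 < n)%N -> ordS i != i.
Proof.
move=> n_gt1; apply/eqP => /(congr1 val) /=; have := ltn_ord i.
rewrite leq_eqVlt => /predU1P[Si_n|/modn_small->]; last lia.
by rewrite Si_n modnn; lia.
Qed.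

Lemma sumn_transfer n (lam nu : 'I_n -> nat) (i j : 'I_n) : j != i ->
  (forall k, k != i -> k != j -> nu k = lam k) ->
  (nu i + nu j = lam i + lam j)%N -> (\sum_k nu k = \sum_k lam k)%N.
Proof.
move=> ji nuE sum_ij; rewrite (bigD1 i) // [RHS](bigD1 i) //= (bigD1 j) ?ji //=.
rewrite [in RHS](bigD1 j) ?ji //= (eq_bigr lam) => [|k /andP[]]; last exact: nuE.
lia.
Qed.

Section AlphaShifts.
Variables (n : nat) (lam : 'I_n -> nat) (i : 'I_n).
Hypothesis Si_neq : ordS i != i.

Lemma plus_alphaE k : (0 < lam (ordS i))%N ->
  (plus_alpha lam i k)%:Z = epsp k i + (lam k)%:Z.
Proof.
move=> lam_Si_gt0; rewrite /plus_alpha /epsp.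
have [->|_] := eqVneq k i; first lia.
by have [->|_] := eqVneq k (ordS i); rewrite ?(negPf Si_neq); lia.
Qed.

Lemma minus_alphaE k : (0 < lam i)%N ->
  (minus_alpha lam i k)%:Z = - epsp k i + (lam k)%:Z.
Proof.
move=> lam_i_gt0; rewrite /minus_alpha /epsp.
have [->|_] := eqVneq k i; first lia.
by have [->|_] := eqVneq k (ordS i); rewrite ?(negPf Si_neq); lia.
Qed.

Lemma sum_plus_alpha : (0 < lam (ordS i))%N ->
  (\sum_k plus_alpha lam i k = \sum_k lam k)%N.
Proof.
move=> lam_Si_gt0; apply: (sumn_transfer Si_neq) => [k ki kSi|].
  by rewrite /plus_alpha (negPf ki) (negPf kSi).
by rewrite /plus_alpha eqxx (negPf Si_neq) eqxx; lia.
Qed.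

Lemma sum_minus_alpha : (0 < lam i)%N ->
  (\sum_k minus_alpha lam i k = \sum_k lam k)%N.
Proof.
move=> lam_i_gt0; apply: (sumn_transfer Si_neq) => [k ki kSi|].
  by rewrite /minus_alpha (negPf ki) (negPf kSi).
by rewrite /minus_alpha eqxx (negPf Si_neq) eqxx; lia.
Qed.

End AlphaShifts.

Section TRelations.
Variables (n r : nat) (A : algType Qv) (E F K Ki : 'I_n -> A).
Hypothesis n_gt1 : (1 < n)%N.
Hypothesis T_rel : T_relations r E F K Ki.

Lemma E_one_lam (lam : 'I_n -> nat) i : (\sum_k lam k)%N = r ->
  E i * one_lam K Ki lam =
    if (0 < lam (ordS i))%N then one_lam K Ki (plus_alpha lam i) * E i else 0.
Proof.
have [K_comm [K_inv [KE [_ [_ [_ [_ [K_prod K_ann]]]]]]]] := T_rel.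
have Si_neq := ordS_neq i n_gt1.
have homE : homogeneous K (E i) (fun k => epsp k i) by move=> k; apply: KE.
move=> sum_lam; case: ifP => [lam_Si_gt0|]; last first.
  move/negbT; rewrite lt0n negbK => /eqP lam_Si0.
  apply: (homogeneous_one_lam_eq0 K_comm K_inv K_prod K_ann homE sum_lam (k := ordS i)).
  by rewrite /epsp eq_sym (negPf Si_neq) eqxx lam_Si0.
apply: (homogeneous_one_lam K_comm K_inv K_prod K_ann homE sum_lam).
  by rewrite sum_plus_alpha.
by move=> k; apply: plus_alphaE.
Qed.

Lemma F_one_lam (lam : 'I_n -> nat) i : (\sum_k lam k)%N = r ->
  F i * one_lam K Ki lam =
    if (0 < lam i)%N then one_lam K Ki (minus_alpha lam i) * F i else 0.
Proof.
have [K_comm [K_inv [_ [KF [_ [_ [_ [K_prod K_ann]]]]]]]] := T_rel.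
have Si_neq := ordS_neq i n_gt1.
have homF : homogeneous K (F i) (fun k => - epsp k i) by move=> k; apply: KF.
move=> sum_lam; case: ifP => [lam_i_gt0|]; last first.
  move/negbT; rewrite lt0n negbK => /eqP lam_i0.
  apply: (homogeneous_one_lam_eq0 K_comm K_inv K_prod K_ann homF sum_lam (k := i)).
  by rewrite /epsp eqxx lam_i0.
apply: (homogeneous_one_lam K_comm K_inv K_prod K_ann homF sum_lam).
  by rewrite sum_minus_alpha.
by move=> k; apply: minus_alphaE.
Qed.

End TRelations.

Theorem lemma2p2p6 (n r : nat) (A : algType Qv) (E F K Ki : 'I_n -> A)
    (lam : 'I_n -> nat) (i : 'I_n) :
  (3 <= r)%N -> (r < n)%N ->
  T_relations r E F K Ki ->
  (\sum_(j < n) lam j)%N = r ->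
  (E i * one_lam K Ki lam =
     if (0 < lam (ordS i))%N then one_lam K Ki (plus_alpha lam i) * E i else 0)
  /\
  (F i * one_lam K Ki lam =
     if (0 < lam i)%N then one_lam K Ki (minus_alpha lam i) * F i else 0).
Proof.
move=> r_ge3 r_lt_n T_rel sum_lam; have n_gt1 : (1 < n)%N by lia.
split; first exact: E_one_lam n_gt1 T_rel lam i sum_lam.
exact: F_one_lam n_gt1 T_rel lam i sum_lam.
Qed.
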